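(* Let $X,Y$ be Banach spaces, $f:X\to Y$ a function, $G:Y\rightrightarrows X$ a multifunction, $L,M>0$, and $(\overline{x},\overline{y},\overline{z})\in X\times Y\times Y$ with $\overline{y}=f(\overline{x})$ and $(\overline{z},\overline{x})\in\operatorname{Gr}G$. Suppose: (i) $f$ is Lipschitz continuous around $\overline{x}$; (ii) $\operatorname{Gr}G$ is locally closed around $(\overline{z},\overline{x})$; (iii) $f$ is $L$-open around $(\overline{x},\overline{y})$; (iv) $G$ is $M$-open around $(\overline{z},\overline{x})$; (v) $LM>1$. Then $f-G^{-1}$ is $(L-M^{-1})$-open around $(\overline{x},\overline{y}-\overline{z})$.
   Context: $B(x,r)$ denotes the open ball. $(f-G^{-1})(x)=\{f(x)-z: x\in G(z)\}$. A set-valued map $T:U\rightrightarrows V$ (a function being viewed as a single-valued map) is $L$-open around $(a,b)\in\operatorname{Gr}T$ if there exist $\varepsilon>0$ and neighborhoods $U_0$ of $a$, $V_0$ of $b$ such that for every $\rho\in]0,\varepsilon[$ and every $(u,v)\in\operatorname{Gr}T\cap(U_0\times V_0)$, $B(v,\rho L)\subset T(B(u,\rho))$. $\operatorname{Gr}G$ locally closed around a point means that its intersection with the closure of some neighborhood of that point is closed. *)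

From HB Require Import structures.
From mathcomp Require Import all_boot all_order all_algebra.
From mathcomp Require Import all_classical all_reals all_analysis.
Set Implicit Arguments. Unset Strict Implicit. Unset Printing Implicit Defensive.
Import Order.TTheory GRing.Theory Num.Theory.
Import numFieldNormedType.Exports.
Local Open Scope classical_set_scope.
Local Open Scope ring_scope.

(* A set-valued map T : U ⇉ V is represented as T : U -> set V;
   its graph is {(u,v) | v ∈ T u}. A function f is viewed as u |-> {f u}. *)
Definition graph {U V : Type} (T : U -> set V) : set (U * V) :=
  [set p | T p.1 p.2].

Definition single_valued {U V : Type} (f : U -> V) : U -> set V :=
  fun u => [set f u].

Definition L_open_around {R : realType} {U V : normedModType R}
    (L : R) (T : U -> set V) (a : U) (b : V) : Prop :=
  exists eps : R, 0 < eps /\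
  exists U0 : set U, nbhs a U0 /\
  exists V0 : set V, nbhs b V0 /\
  forall rho : R, 0 < rho -> rho < eps ->
  forall u v, T u v -> U0 u -> V0 v ->
    ball v (rho * L) `<=` [set w | exists2 u', ball u rho u' & T u' w].

Definition lipschitz_around {R : realType} {U V : normedModType R}
    (f : U -> V) (a : U) : Prop :=
  exists k : R, exists N : set U, nbhs a N /\
    forall x y, N x -> N y -> `|f x - f y| <= k * `|x - y|.

Definition locally_closed_around {T : topologicalType} (S : set T) (p : T) : Prop :=
  exists N : set T, nbhs p N /\ closed (S `&` closure N).

Definition minus_inv {R : realType} {X Y : normedModType R}
    (f : X -> Y) (G : Y -> set X) : X -> set Y :=
  fun x => [set f x - z | z in [set z | G z x]].

From HB Require Import structures.
From mathcomp Require Import all_boot all_order all_algebra.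
From mathcomp Require Import all_classical all_reals all_analysis.
From mathcomp Require Import ring lra.
Import Order.TTheory GRing.Theory Num.Theory.
Import numFieldNormedType.Exports.
Local Open Scope classical_set_scope.
Local Open Scope ring_scope.

(* A Lyusternik-Graves iteration.  From (x, z) in Gr G with residual
   |w - (f x - z)| < t L, the L-openness of f gives x' within t of x with
   f x' = w + z, and the M-openness of G at (z, x) gives z' within t / M of z
   with (z', x') in Gr G; the new residual is |z' - z| < t / M = (q t) L with
   q = (L M)^-1 < 1.  The steps shrink geometrically, so the iterates converge
   after a total displacement t / (1 - q); the closedness of Gr G and the
   continuity of f (from the Lipschitz property) give a limit with
   f x - z = w.  Starting from t (1 - q)^-1 < rho turns the residual budget
   rho L (1 - q) = rho (L - M^-1) into the claimed openness modulus. *)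

Lemma dependent_choice_nat (T : Type) (P : nat -> T -> Prop)
    (Q : nat -> T -> T -> Prop) (s0 : T) :
  P 0%N s0 -> (forall n s, P n s -> exists2 s', P n.+1 s' & Q n s s') ->
  exists s : nat -> T, s 0%N = s0 /\ forall n, P n (s n) /\ Q n (s n) (s n.+1).
Proof.
move=> P0 step.
have /choice[g gP] : forall p : nat * T,
    exists s', P p.1 p.2 -> P p.1.+1 s' /\ Q p.1 p.2 s'.
  move=> [n s]; have [Pns|nPns] := pselect (P n s); last by exists s => /nPns.
  by have [s' ? ?] := step n s Pns; exists s'.
pose s := fix s n := if n is n'.+1 then g (n', s n') else s0.
have Ps n : P n (s n) by elim: n => [|n IH] //=; exact: (gP (n, s n) IH).1.
by exists s; split=> // n; split=> //; exact: (gP (n, s n) (Ps n)).2.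
Qed.

Section GeometricSequences.
Context {R : realType} {V : completeNormedModType R}.
Implicit Types (s : nat -> V) (c q : R).

Lemma cvg_geometric_increments s c q : 0 <= q < 1 ->
  (forall n, `|s n.+1 - s n| <= c * q ^+ n) -> cvgn s.
Proof.
move=> /andP[q_ge0 q_lt1] s_inc.
have c_ge0 : 0 <= c by have := s_inc 0%N; rewrite expr0 mulr1; apply: le_trans.
have -> : s = (fun n => s 0%N + series (telescope s) n).
  by apply/funext => n; rewrite -eq_sum_telescope.
apply: is_cvgD; first exact: is_cvg_cst.
apply: normed_cvg.
apply: (@series_le_cvg _ _ (geometric c q)) => [n|n|n|].
- exact: normr_ge0.
- by rewrite /geometric /= mulr_ge0 ?exprn_ge0.
- exact: s_inc.
- by apply: is_cvg_geometric_series; rewrite ger0_norm.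
Qed.

Lemma cvg_geometric_dist s (l : V) c q : `|q| < 1 ->
  (forall n, `|l - s n| <= c * q ^+ n) -> s @ \oo --> l.
Proof.
move=> q_lt1 s_dist; apply/cvgrPdist_le => e e_gt0.
have /cvgr0_norm_le/(_ e e_gt0) := cvg_geometric c q_lt1.
apply: filterS => n; apply: le_trans; apply: (le_trans (s_dist n)).
exact: ler_norm.
Qed.

Lemma cvg_norm_sub_le {s} {a l : V} {r : R} : s @ \oo --> l ->
  (forall n, `|s n - a| <= r) -> `|l - a| <= r.
Proof.
move=> s_l s_le.
have sa_la : `|s n - a| @[n --> \oo] --> `|l - a|.
  by apply: cvg_norm; apply: cvgB => //; exact: cvg_cst.
by rewrite -(cvg_lim _ sa_la) //; apply: limr_le; [exact: cvgP sa_la|exact: nearW].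
Qed.

End GeometricSequences.

Lemma lipschitz_around_continuous_near {R : realType} {U V : normedModType R}
    {f : U -> V} {a : U} :
  lipschitz_around f a -> \forall x \near a, {for x, continuous f}.
Proof.
move=> [k [N [Na f_lip]]]; apply: filterS (nbhs_interior Na) => x Nx.
have K_gt0 : 0 < `|k| + 1 by rewrite ltr_wpDl.
apply/cvgrPdist_lt => e e_gt0; near=> y.
apply: le_lt_trans (f_lip x y (nbhs_singleton Nx) _) _; first by near: y.
apply: (@le_lt_trans _ _ ((`|k| + 1) * `|x - y|)).
  by apply: ler_wpM2r => //; apply: le_trans (ler_norm k) _; rewrite lerDl.
rewrite mulrC -ltr_pdivlMr //; near: y.
by apply/nbhs_normP; exists (e / (`|k| + 1)) => //=; rewrite divr_gt0.
Unshelve. all: by end_near. Qed.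

Lemma nbhs_pair_common_ball {R : realDomainType} {U V : pseudoMetricType R}
    {a : U} {b : V} {A : set U} {B : set V} {C : set (V * U)} :
  nbhs a A -> nbhs b B -> nbhs (b, a) C ->
  exists2 d : R, 0 < d & [/\ ball a d `<=` A, ball b d `<=` B
    & forall z x, ball b d z -> ball a d x -> C (z, x)].
Proof.
move=> /nbhs_ballP[dA dA_gt0 dAP] /nbhs_ballP[dB dB_gt0 dBP] /nbhs_ballP[dC dC_gt0 dCP].
exists (Num.min dA (Num.min dB dC)); first by rewrite !lt_min dA_gt0 dB_gt0.
split=> [x|z|z x] ab_d.
- by apply/dAP/(le_ball _ ab_d); rewrite ge_min lexx.
- by apply/dBP/(le_ball _ ab_d); rewrite !ge_min lexx orbT.
- move=> ax_d; apply: (dCP (z, x)); split=> /=.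
  + by apply: le_ball ab_d; rewrite !ge_min lexx !orbT.
  + by apply: le_ball ax_d; rewrite !ge_min lexx !orbT.
Qed.

Lemma minus_inv_near_balls {R : realType} {X Y : normedModType R}
    {f : X -> Y} {xb : X} (zb : Y) {M d : R} :
  0 < M -> 0 < d -> {for xb, continuous f} ->
  exists eps : R, 0 < eps /\
  exists U0 : set X, nbhs xb U0 /\ exists V0 : set Y, nbhs (f xb - zb) V0 /\
  forall rho u z, 0 < rho -> rho < eps -> U0 u -> V0 (f u - z) ->
    ball u rho `<=` ball xb d /\ ball z (rho / M) `<=` ball zb d.
Proof.
move=> M_gt0 d_gt0 f_xb.
have d3_gt0 : 0 < d / 3 by rewrite divr_gt0.
exists (Num.min (d / 2) (M * (d / 3))); split.
  by rewrite lt_min !mulr_gt0 ?invr_gt0.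
exists [set u | `|xb - u| < d / 2 /\ `|f xb - f u| < d / 3]; split.
  near=> u; split; last by near: u; move/cvgrPdist_lt: f_xb; apply.
  by near: u; apply/nbhs_normP; exists (d / 2) => //=; rewrite divr_gt0.
exists (ball (f xb - zb) (d / 3)); split; first exact: nbhsx_ballx.
move=> rho u z rho_gt0; rewrite lt_min => /andP[rho_d rho_Md] [xb_u fxb_fu].
rewrite -(@ball_normE _ X) -(@ball_normE _ Y) /= => res; split=> y /= y_near.
  by apply: le_lt_trans (ler_distD u _ _) _; lra.
have zb_z : `|zb - z| <= `|f xb - f u| + `|f xb - zb - (f u - z)|.
  have -> : zb - z = f xb - f u - (f xb - zb - (f u - z)).
    by rewrite opprB !addrA subrK opprB addrC addrA subrK.
  exact: ler_normB.
have rho_M : rho / M < d / 3 by rewrite ltr_pdivrMr // mulrC.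
by apply: le_lt_trans (ler_distD z _ _) _; lra.
Unshelve. all: by end_near. Qed.

Section MinusInverseOpen.
Context {R : realType} {X Y : completeNormedModType R}.
Variables (f : X -> Y) (G : Y -> set X) (L M ef eg : R).
Variables (Dx : set X) (Dz : set Y) (N : set (Y * X)).
Hypotheses (L_gt0 : 0 < L) (M_gt0 : 0 < M) (LM_gt1 : 1 < L * M).
Hypothesis f_open : forall t x, 0 < t -> t < ef -> Dx x ->
  ball (f x) (t * L) `<=` [set y | exists2 x', ball x t x' & y = f x'].
Hypothesis G_open : forall s z x, 0 < s -> s < eg -> G z x -> Dz z -> Dx x ->
  ball x (s * M) `<=` [set x' | exists2 z', ball z s z' & G z' x'].
Hypothesis f_cont : forall x, Dx x -> {for x, continuous f}.
Hypothesis graphG_closed : closed (graph G `&` N).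
Hypothesis DzDx_N : forall z x, Dz z -> Dx x -> N (z, x).

Lemma minus_inv_step x z w t : G z x -> Dx x -> Dz z ->
  0 < t -> t < ef -> t < M * eg -> `|w - (f x - z)| < t * L ->
  exists x' z', [/\ G z' x', `|x' - x| < t, `|z' - z| < t / M
    & `|w - (f x' - z')| < t / M].
Proof.
move=> Gzx Dx_x Dz_z t_gt0 t_ef t_eg res.
have fx_wz : ball (f x) (t * L) (w + z).
  by rewrite -ball_normE /= distrC -addrA -opprB.
have [x' x_x' wz_fx'] := f_open _ _ t_gt0 t_ef Dx_x _ fx_wz.
have tM_gt0 : 0 < t / M by rewrite divr_gt0.
have tM_eg : t / M < eg by rewrite ltr_pdivrMr // mulrC.
have x_x'M : ball x (t / M * M) x' by rewrite divfK ?gt_eqF.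
have [z' z_z' Gz'x'] := G_open _ _ _ tM_gt0 tM_eg Gzx Dz_z Dx_x _ x_x'M.
move: x_x' z_z'; rewrite -!ball_normE /= => x_x' z_z'.
exists x', z'; split; rewrite 1?distrC //.
by rewrite -wz_fx' [w + z]addrC addrAC addrK.
Qed.

Let q := (L * M)^-1.
Let c := L - M^-1.

Let q_gt0 : 0 < q. Proof. by rewrite invr_gt0 mulr_gt0. Qed.
Let q_lt1 : q < 1. Proof. by rewrite invf_lt1 // mulr_gt0. Qed.
Let c_gt0 : 0 < c. Proof. by rewrite subr_gt0 -(ltr_pM2r M_gt0) mulVf ?gt_eqF. Qed.
Let cE : c = L * (1 - q).
Proof. by rewrite /c /q invfM mulrBr mulr1 mulrA mulfV ?gt_eqF // mul1r. Qed.
Let cqE : c * q = (1 - q) / M.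
Proof. by rewrite cE mulrAC /q invfM mulrA mulfV ?gt_eqF // mul1r mulrC. Qed.

Section Iteration.
Variables (u : X) (z w : Y) (D : R).
Hypotheses (D_gt0 : 0 < D) (D_lt_ef : D < ef) (D_lt_Meg : D < M * eg).
Hypothesis Dx_ball : forall x, `|x - u| <= D -> Dx x.
Hypothesis Dz_ball : forall z', `|z' - z| <= D / M -> Dz z'.

(* Step n has size D (1 - q) q^n, so after n steps the iterate has moved
   by at most D (1 - q^n) and the residual is below D c q^n. *)
Let inv n (p : X * Y) := [/\ G p.2 p.1, `|p.1 - u| <= D * (1 - q ^+ n),
  `|p.2 - z| <= D * (1 - q ^+ n) / M & `|w - (f p.1 - p.2)| < D * c * q ^+ n].

Let incr n (p p' : X * Y) := `|p'.1 - p.1| <= D * (1 - q) * q ^+ n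
  /\ `|p'.2 - p.2| <= D * (1 - q) * q ^+ n / M.

Let iterate_step n p : inv n p -> exists2 p', inv n.+1 p' & incr n p p'.
Proof.
case: p => x z' [/= Gz'x x_u z'_z res].
set t := D * (1 - q) * q ^+ n.
have qn_gt0 : 0 < q ^+ n := exprn_gt0 n q_gt0.
have qn_le1 : q ^+ n <= 1 := exprn_ile1 n (ltW q_gt0) (ltW q_lt1).
have t_gt0 : 0 < t by rewrite !mulr_gt0 // subr_gt0.
have t_le_D : t <= D.
  rewrite /t -mulrA ler_piMr ?(ltW D_gt0) //.
  by rewrite mulr_ile1 ?subr_ge0 ?gerBl ?(ltW q_gt0) ?(ltW q_lt1) ?(ltW qn_gt0).
have Dn_le_D : D * (1 - q ^+ n) <= D by rewrite ler_piMr ?(ltW D_gt0) // gerBl ltW.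
have Dx_x : Dx x by apply/Dx_ball/(le_trans x_u).
have Dz_z' : Dz z'.
  by apply/Dz_ball/(le_trans z'_z); rewrite ler_wpM2r // invr_ge0 (ltW M_gt0).
have res_t : `|w - (f x - z')| < t * L.
  by have -> : t * L = D * c * q ^+ n by rewrite /t cE; ring.
have [x' [z'' [Gz''x' x'_x z''_z' res']]] := minus_inv_step _ _ _ _ Gz'x Dx_x Dz_z' t_gt0
  (le_lt_trans t_le_D D_lt_ef) (le_lt_trans t_le_D D_lt_Meg) res_t.
exists (x', z''); last by split; exact: ltW.
have DnS : D * (1 - q ^+ n.+1) = t + D * (1 - q ^+ n) by rewrite exprS /t; ring.
split => //=.
- by rewrite DnS; apply: le_trans (ler_distD x _ _) _; rewrite lerD // ltW.
- rewrite DnS mulrDl; apply: le_trans (ler_distD z' _ _) _.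
  by rewrite lerD // ltW.
- by have -> : D * c * q ^+ n.+1 = t / M by rewrite exprS mulrA -(mulrA D) cqE /t; ring.
Qed.

Let iterates : G z u -> `|w - (f u - z)| < D * c ->
  exists s : nat -> X * Y,
    s 0%N = (u, z) /\ forall n, inv n (s n) /\ incr n (s n) (s n.+1).
Proof.
move=> Gzu res; apply: dependent_choice_nat; last exact: iterate_step.
by split; rewrite /= ?expr0 ?subrr ?mulr0 ?mul0r ?normr0 ?mulr1.
Qed.

Lemma minus_inv_iterates_limit : G z u -> `|w - (f u - z)| < D * c ->
  exists2 x, `|x - u| <= D & minus_inv f G x w.
Proof.
move=> Gzu res; have [s [s0 s_inv]] := iterates Gzu res.
pose xs n := (s n).1; pose zs n := (s n).2.
have q_range : 0 <= q < 1 by rewrite ltW ?q_lt1.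
have D_qn n : D * (1 - q ^+ n) <= D.
  by rewrite ler_piMr ?(ltW D_gt0) // gerBl exprn_ge0 // ltW.
have xs_cvg : cvgn xs.
  apply: (cvg_geometric_increments _ (D * (1 - q)) _ q_range) => n.
  by have [_ []] := s_inv n.
have zs_cvg : cvgn zs.
  apply: (cvg_geometric_increments _ (D * (1 - q) / M) _ q_range) => n.
  by have [_ [_]] := s_inv n; rewrite mulrAC.
set x := limn xs; set z' := limn zs.
have x_u : `|x - u| <= D.
  apply: (cvg_norm_sub_le xs_cvg) => n.
  by have [[_ xn_u _ _] _] := s_inv n; exact: le_trans xn_u (D_qn n).
have Dx_x := Dx_ball _ x_u.
have Gz'x : G z' x.
  have graph_near : \forall n \near \oo, (graph G `&` N) (zs n, xs n).
    apply: nearW => n; have [[Gn xn_u zn_z _] _] := s_inv n; split=> //.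
    apply: DzDx_N; [apply: Dz_ball|apply: Dx_ball; exact: le_trans xn_u (D_qn n)].
    by apply: le_trans zn_z _; rewrite ler_wpM2r // invr_ge0 ltW.
  by have [] := closed_cvg _ graphG_closed graph_near (z', x) (cvg_pair zs_cvg xs_cvg).
have res_cvg : (f \o xs - zs) @ \oo --> w.
  apply: (cvg_geometric_dist _ _ (D * c) q); first by rewrite ger0_norm // ltW.
  by move=> n; have [[_ _ _ /ltW]] := s_inv n.
have lim_cvg : (f \o xs - zs) @ \oo --> f x - z'.
  by apply: cvgB => //; exact: continuous_cvg (f_cont _ Dx_x) xs_cvg.
by exists x => //; exists z' => //; exact: (cvg_unique _ lim_cvg res_cvg).
Qed.

End Iteration.

Lemma minus_inv_open_at u z rho : G z u -> 0 < rho -> rho <= ef -> rho <= M * eg ->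
  ball u rho `<=` Dx -> ball z (rho / M) `<=` Dz ->
  ball (f u - z) (rho * c) `<=` [set w | exists2 x, ball u rho x & minus_inv f G x w].
Proof.
move=> Gzu rho_gt0 rho_ef rho_eg u_Dx z_Dz w; rewrite -ball_normE /= => res.
have e_lt : `|f u - z - w| / c < rho by rewrite ltr_pdivrMr.
have e_ge0 : 0 <= `|f u - z - w| / c by rewrite divr_ge0 // ltW.
pose D := (`|f u - z - w| / c + rho) / 2.
have D_gt0 : 0 < D by rewrite /D; lra.
have D_lt_rho : D < rho by rewrite /D; lra.
have res_D : `|w - (f u - z)| < D * c.
  by rewrite distrC -ltr_pdivrMr // /D; lra.
have Dx_ball x : `|x - u| <= D -> Dx x.
  by move=> x_u; apply: u_Dx; rewrite -ball_normE /= distrC; lra.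
have Dz_ball z' : `|z' - z| <= D / M -> Dz z'.
  move=> z'_z; apply: z_Dz; rewrite -ball_normE /= distrC.
  by apply: le_lt_trans z'_z _; rewrite ltr_pM2r ?invr_gt0.
have [x x_u wx] := @minus_inv_iterates_limit u z w D D_gt0
  (lt_le_trans D_lt_rho rho_ef) (lt_le_trans D_lt_rho rho_eg)
  Dx_ball Dz_ball Gzu res_D.
by exists x => //; rewrite -ball_normE /= distrC; lra.
Qed.

End MinusInverseOpen.

Theorem corollary3p4 (R : realType) (X Y : completeNormedModType R)
  (f : X -> Y) (G : Y -> set X) (L M : R)
  (xb : X) (yb zb : Y) :
  0 < L -> 0 < M ->
  yb = f xb -> G zb xb ->
  lipschitz_around f xb ->
  locally_closed_around (graph G) (zb, xb) ->
  L_open_around L (single_valued f) xb yb ->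
  L_open_around M G zb xb ->
  1 < L * M ->
  L_open_around (L - M^-1) (minus_inv f G) xb (yb - zb).
Proof.
move=> L_gt0 M_gt0 -> _ f_lip [N [N_zx graph_closed]]
  [ef [ef_gt0 [Uf [Uf_x [Vf [Vf_y f_op]]]]]]
  [eg [eg_gt0 [Ug [Ug_z [Vg [Vg_x G_op]]]]]] LM_gt1.
have f_cont_near := lipschitz_around_continuous_near f_lip.
have f_xb : {for xb, continuous f} := nbhs_singleton f_cont_near.
have near_xb : \forall x \near xb, [/\ Uf x, Vf (f x), Vg x & {for x, continuous f}].
  by near=> x; split; near: x => //; exact: f_xb.
have [d d_gt0 [Dx_P Dz_P DzDx_N]] := nbhs_pair_common_ball near_xb Ug_z N_zx.
have [eps [eps_gt0 [U0 [U0_x [V0 [V0_y balls]]]]]] :=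
  minus_inv_near_balls zb M_gt0 d_gt0 f_xb.
exists (Num.min eps (Num.min ef (M * eg))).
split; first by rewrite !lt_min eps_gt0 ef_gt0 mulr_gt0.
exists U0; split => //; exists V0; split => //.
move=> rho rho_gt0; rewrite !lt_min => /and3P[rho_eps rho_ef rho_eg] u _ [z Gzu <-].
move=> U0_u V0_v; have [u_Dx z_Dz] := balls rho u z rho_gt0 rho_eps U0_u V0_v.
apply: (@minus_inv_open_at _ _ _ f G L M ef eg _ _ (closure N)) u_Dx z_Dz;
  rewrite ?ltW //.
- move=> t x t_gt0 t_ef /Dx_P[Uf_x' Vf_fx _ _].
  exact: f_op t t_gt0 t_ef x (f x) erefl Uf_x' Vf_fx.
- move=> s z' x s_gt0 s_eg Gz'x /Dz_P Ug_z' /Dx_P[_ _ Vg_x' _].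
  exact: G_op s s_gt0 s_eg z' x Gz'x Ug_z' Vg_x'.
- by move=> x /Dx_P[].
- by move=> z' x zb_z' xb_x; apply: subset_closure; exact: DzDx_N.
Unshelve. all: by end_near. Qed.
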